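(* (i) There exist quantum programs $P_1,P_2$ and projective predicates $A,B$ such that $\models_P P_1\sim P_2:A\Rightarrow B$ holds but $\models_S P_1\sim P_2:A\Rightarrow B$ does not. (ii) There exist quantum programs $P_1,P_2$ and projective predicates $A,B$ such that $\models_S P_1\sim P_2:A\Rightarrow B$ holds but $\models_P P_1\sim P_2:A\Rightarrow B$ does not. (iii) For all quantum programs $P_1,P_2$ and quantum predicates $A,B$, if $\models P_1\sim P_2:A\Rightarrow B$ then $\models_S P_1\sim P_2:A\Rightarrow B$. (iv) There exist quantum programs $P_1,P_2$ and quantum predicates $A,B$ such that $\models_S P_1\sim P_2:A\Rightarrow B$ holds but $\models P_1\sim P_2:A\Rightarrow B$ does not.
   Context: Quantum programs are those of the quantum while-language ($\mathbf{skip}$, $q:=|0\rangle$, $\bar q:=U[\bar q]$, sequencing, measurement-guarded case statements and while loops); each program $P$ has finite-dimensional state space $\mathcal{H}_P$ and denotational semantics $\llbracket P\rrbracket$, a quantum operation on $\mathcal{D}^\le(\mathcal{H}_P)$ (e.g. $\llbracket\mathbf{skip}\rrbracket$ is the identity, $\llbracket q:=|0\rangle\rrbracket(\rho)=\sum_i|0\rangle\langle i|\rho|i\rangle\langle 0|$, $\llbracket \bar q:=U[\bar q]\rrbracket(\rho)=U\rho U^\dagger$). Variables of $P_1,P_2$ are disjoint copies; predicates live on $\mathcal{H}_{P_1}\otimes\mathcal{H}_{P_2}$. A quantum predicate is a Hermitian $A$ with $0\sqsubseteq A\sqsubseteq I$; a projective predicate is a projection. Coupling: $\sigma$ couples $\langle\rho_1,\rho_2\rangle$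 if $\mathrm{tr}_2\sigma=\rho_1$, $\mathrm{tr}_1\sigma=\rho_2$; lifting $\rho_1A^\#\rho_2$: some coupling has support in $A$. Validity $\models P_1\sim P_2:A\Rightarrow B$: for every $\rho\in\mathcal{D}^\le(\mathcal{H}_{P_1}\otimes\mathcal{H}_{P_2})$ there is a coupling $\sigma$ for $\langle\llbracket P_1\rrbracket(\mathrm{tr}_2\rho),\llbracket P_2\rrbracket(\mathrm{tr}_1\rho)\rangle$ with $\mathrm{tr}(A\rho)\le\mathrm{tr}(B\sigma)+\mathrm{tr}(\rho)-\mathrm{tr}(\sigma)$. Validity with separable inputs $\models_S$: the same, but quantifying only over $\rho$ separable between $\mathcal{H}_{P_1}$ and $\mathcal{H}_{P_2}$ (i.e. $\rho=\sum_m\rho_{m1}\otimes\rho_{m2}$ with $\rho_{mi}$ positive). Projective validity $\models_P$: for all $\rho_1,\rho_2$ with $\rho_1A^\#\rho_2$, $\llbracket P_1\rrbracket(\rho_1)B^\#\llbracket P_2\rrbracket(\rho_2)$. *)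

From HB Require Import structures.
From mathcomp Require Import all_boot all_order all_algebra.
From mathcomp Require Import complex.
From mathcomp Require Import boolp classical_sets reals topology normedtype sequences.
Set Implicit Arguments. Unset Strict Implicit. Unset Printing Implicit Defensive.
Import Order.TTheory GRing.Theory Num.Theory numFieldNormedType.Exports.
Local Open Scope ring_scope.

Section Quantum.
Variable R : realType.
Local Notation C := (R[i]).

(** Operators on the finite-dimensional Hilbert space with orthonormal basis S
    (the space of functions S -> C), given by their matrix entries. *)
Definition op (S : finType) := S -> S -> C.
Definition vec (S : finType) := S -> C.

Section Ops.
Variable S : finType.
Implicit Types (A B : op S) (v : vec S).
Definition opmul A B : op S := fun s t => \sum_u A s u * B u t.
Definition opadj A : op S := fun s t => (A t s)^*%C.
Definition opadd A B : op S := fun s t => A s t + B s t.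
Definition opsub A B : op S := fun s t => A s t - B s t.
Definition opid : op S := fun s t => (s == t)%:R.
Definition op0 : op S := fun _ _ => 0.
Definition optr A : C := \sum_s A s s.
Definition opapp A v : vec S := fun s => \sum_t A s t * v t.
Definition psd A : Prop := forall v : vec S, 0 <= \sum_s (v s)^*%C * opapp A v s.
Definition hermitian A : Prop := forall s t, A s t = (A t s)^*%C.
Definition lowner A B : Prop := psd (opsub B A).
Definition qpredicate A : Prop := hermitian A /\ lowner op0 A /\ lowner A opid.
Definition projection A : Prop := hermitian A /\ opmul A A = A.
Definition pdensity A : Prop := psd A /\ optr A <= 1.
Definition unitary A : Prop := opmul (opadj A) A = opid.
Definition sandwich (M : op S) (rho : op S) : op S := opmul (opmul M rho) (opadj M).
Definition oplim (u : nat -> op S) : op S :=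
  fun s t => ((limn (fun N => complex.Re (u N s t))) +i* (limn (fun N => complex.Im (u N s t))))%C.
End Ops.
Arguments opid {S}.
Arguments op0 {S}.

Section Tensor.
Variables S1 S2 : finType.
Definition optensor (A : op S1) (B : op S2) : op (prod S1 S2) :=
  fun p q => A p.1 q.1 * B p.2 q.2.
Definition ptr2 (r : op (prod S1 S2)) : op S1 := fun s t => \sum_u r (s, u) (t, u).
Definition ptr1 (r : op (prod S1 S2)) : op S2 := fun s t => \sum_u r (u, s) (u, t).
Definition separable (r : op (prod S1 S2)) : Prop :=
  exists l : seq (op S1 * op S2),
    (forall x, x \in l -> psd x.1 /\ psd x.2) /\
    r = (fun p q => \sum_(x <- l) optensor x.1 x.2 p q).
Definition coupling (sigma : op (prod S1 S2)) (rho1 : op S1) (rho2 : op S2) : Prop :=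
  psd sigma /\ ptr2 sigma = rho1 /\ ptr1 sigma = rho2.
(** the support (range) of sigma is contained in the subspace (projection) A *)
Definition supp_in (sigma A : op (prod S1 S2)) : Prop :=
  forall v, opapp A (opapp sigma v) = opapp sigma v.
Definition lifting (rho1 : op S1) (A : op (prod S1 S2)) (rho2 : op S2) : Prop :=
  exists sigma, coupling sigma rho1 rho2 /\ supp_in sigma A.
End Tensor.

Section Lang.
Variables (n : nat) (d : 'I_n -> nat).
(** variables are 'I_n; variable i has state space of dimension (d i).+1;
    computational basis of H_P: assignments of a basis index to every variable *)
Definition st := {dffun forall i : 'I_n, 'I_(d i).+1}.
Definition lst k (qs : k.-tuple 'I_n) := {dffun forall j : 'I_k, 'I_(d (tnth qs j)).+1}.
Definition restr k (qs : k.-tuple 'I_n) (s : st) : lst qs :=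
  @finfun _ (fun j : 'I_k => 'I_(d (tnth qs j)).+1) (fun j => s (tnth qs j)).
(** M ⊗ I : operator M on H_qs extended by the identity on the other variables *)
Definition liftop k (qs : k.-tuple 'I_n) (M : op (lst qs)) : op st :=
  fun s t => [forall i, (i \notin qs) ==> (s i == t i)]%:R * M (restr qs s) (restr qs t).
(** |0><i| on variable q, tensored with identity *)
Definition resetK (q : 'I_n) (i : 'I_(d q).+1) : op st :=
  fun s t => [&& [forall j, (j != q) ==> (s j == t j)],
                 (s q == 0 :> nat) & (t q == i :> nat)]%:R.

Inductive prog : Type :=
| PSkip
| PInit (q : 'I_n)
| PUnit (k : nat) (qs : k.-tuple 'I_n) (U : op (lst qs))
| PSeq (P1 P2 : prog)
| PCase (k : nat) (qs : k.-tuple 'I_n) (m : nat)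
        (M : 'I_m -> op (lst qs)) (Ps : 'I_m -> prog)
| PWhile (k : nat) (qs : k.-tuple 'I_n)
         (M0 M1 : op (lst qs)) (body : prog).

Fixpoint wf (P : prog) : Prop :=
  match P with
  | PSkip => True
  | PInit _ => True
  | PUnit _ qs U => uniq qs /\ unitary U
  | PSeq P1 P2 => wf P1 /\ wf P2
  | PCase _ qs m M Ps =>
      [/\ uniq qs, (fun s t => \sum_(j < m) opmul (opadj (M j)) (M j) s t) = opid
        & forall j, wf (Ps j)]
  | PWhile _ qs M0 M1 body =>
      [/\ uniq qs, opadd (opmul (opadj M0) M0) (opmul (opadj M1) M1) = opid & wf body]
  end.

Fixpoint sem (P : prog) (rho : op st) : op st :=
  match P with
  | PSkip => rho
  | PInit q => fun s t => \sum_(i < (d q).+1) sandwich (resetK i) rho s t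
  | PUnit _ qs U => sandwich (liftop U) rho
  | PSeq P1 P2 => sem P2 (sem P1 rho)
  | PCase _ qs m M Ps => fun s t => \sum_(j < m) sem (Ps j) (sandwich (liftop (M j)) rho) s t
  | PWhile _ qs M0 M1 body =>
      let F := fun r => sem body (sandwich (liftop M1) r) in
      oplim (fun N => fun s t => \sum_(j < N) sandwich (liftop M0) (iter j F rho) s t)
  end.
End Lang.

Record qprog := QProg {
  qp_n : nat;
  qp_d : 'I_qp_n -> nat;
  qp_cmd : prog qp_d;
  qp_wf : wf qp_cmd }.
Arguments qp_d : clear implicits.

Definition qstate (P : qprog) : finType := st (qp_d P).
Definition qsem (P : qprog) : op (qstate P) -> op (qstate P) := sem (qp_cmd P).
Arguments qsem : clear implicits.

Section Validity.
Variables (P1 P2 : qprog).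
Local Notation S := (prod (qstate P1) (qstate P2)).
Definition judgement_cond (A B rho : op S) : Prop :=
  exists sigma, coupling sigma (qsem P1 (ptr2 rho)) (qsem P2 (ptr1 rho)) /\
    optr (opmul A rho) <= optr (opmul B sigma) + optr rho - optr sigma.
Definition valid (A B : op S) : Prop :=
  forall rho, pdensity rho -> judgement_cond A B rho.
Definition svalid (A B : op S) : Prop :=
  forall rho, pdensity rho -> separable rho -> judgement_cond A B rho.
Definition pvalid (A B : op S) : Prop :=
  forall rho1 rho2, pdensity rho1 -> pdensity rho2 -> lifting rho1 A rho2 ->
    lifting (qsem P1 rho1) B (qsem P2 rho2).
End Validity.
End Quantum.

From HB Require Import structures.
From mathcomp Require Import all_boot all_order all_algebra.
From mathcomp Require Import complex reals boolp.
From mathcomp Require Import ring lra.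
Set Implicit Arguments. Unset Strict Implicit. Unset Printing Implicit Defensive.
Import Order.TTheory GRing.Theory Num.Theory.
Local Open Scope ring_scope.
Local Open Scope complex_scope.

(* Everything happens on two qubits.  The Bell projector [bell = |Φ><Φ|] is an
   entanglement witness: for positive [X], [Y] one has
   [tr (Φ (X ⊗ Y)) = tr (X Y^T) / 2 <= tr X tr Y / 2], so [tr (Φ ρ) <= tr ρ / 2]
   for separable [ρ], whereas [tr (Φ Φ) = 1].  Hence [skip ~ skip : Φ => I/2]
   is valid on separable inputs only (iv), and [reset ~ reset : Φ => B] with
   [B = |0><0| ⊗ |+><+|] is valid on separable inputs; it is not projectively
   valid (ii), since [I/2 Φ# I/2] holds but the outputs [|0><0|, |0><0|] have
   [|00><00|] as their only coupling, which is not supported in [B].  For (i), a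
   positive operator supported on the line of [Φ] is a multiple of [|Φ><Φ|], so
   its marginals are [c I] and [c I], which are also coupled by [c] times the
   projector [D] onto [span {|01>, |10>}]: [skip ~ skip : Φ => D] is
   projectively valid.  But the separable input [|00><00|] has only itself as a
   coupling of its marginals, and it misses [D]. *)

Section Scalars.
Variable R : realType.
Local Notation C := R[i].

(* [rmorphM] and its relatives, used at [conjc], rewrite to [Num.conj]; these
   restatements keep the [conjc] of the definitions. *)
Lemma conjcM (x y : C) : (x * y)^*%C = x^*%C * y^*%C. Proof. exact: rmorphM. Qed.

Lemma conjcB (x y : C) : (x - y)^*%C = x^*%C - y^*%C. Proof. exact: rmorphB. Qed.

Lemma conjc_sum (I : Type) (r : seq I) (F : I -> C) :
  (\sum_(i <- r) F i)^*%C = \sum_(i <- r) (F i)^*%C.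
Proof. exact: rmorph_sum. Qed.

Lemma conjc_half (n : nat) : (n%:R / 2 : C)^*%C = n%:R / 2.
Proof. by rewrite conjcM conjc_inv !conjc_nat. Qed.

Lemma inv2_gt0 : 0 < 2^-1 :> C. Proof. by rewrite invr_gt0 ltr0n. Qed.

Lemma inv2_lt1 : 2^-1 < 1 :> C. Proof. by rewrite invf_lt1 ?ltr0n // ltr1n. Qed.

Lemma re_mul_le (a b c d p q r s : R) : 0 <= p -> 0 <= q -> 0 <= r -> 0 <= s ->
  a^+2 + b^+2 <= p * q -> c^+2 + d^+2 <= r * s ->
  2 * (a * c - b * d) <= p * s + q * r.
Proof.
move=> p_ge0 q_ge0 r_ge0 s_ge0 ab_le cd_le.
have sq_le : (a * c - b * d)^+2 <= (p * q) * (r * s).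
  apply: le_trans (ler_pM _ _ ab_le cd_le); [|nra|nra].
  have -> : (a^+2 + b^+2) * (c^+2 + d^+2) = (a * c - b * d)^+2 + (a * d + b * c)^+2 by ring.
  by rewrite lerDl sqr_ge0.
have S_ge0 : 0 <= p * s + q * r by rewrite addr_ge0 // mulr_ge0.
have : (2 * (a * c - b * d))^+2 <= (p * s + q * r)^+2.
  by have := sqr_ge0 (p * s - q * r); nra.
nra.
Qed.

End Scalars.

Arguments inv2_gt0 {R}.
Arguments inv2_lt1 {R}.

Section Operators.
Variables (R : realType) (S : finType).
Local Notation C := R[i].
Implicit Types (A B : op R S) (v : vec R S).

Lemma sum_mul_delta (F : S -> C) s : \sum_t F t * (t == s)%:R = F s.
Proof.
rewrite (bigD1 s) //= eqxx mulr1 big1 ?addr0 // => t /negbTE ->.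
by rewrite mulr0.
Qed.

Lemma sum_delta_mul (F : S -> C) s : \sum_t (s == t)%:R * F t = F s.
Proof.
rewrite -[RHS](sum_mul_delta F); apply: eq_bigr => t _.
by rewrite eq_sym mulrC.
Qed.

Lemma opapp_delta A s t : opapp A (fun u => (u == t)%:R) s = A s t.
Proof. exact: sum_mul_delta. Qed.

Lemma opapp_mul A B v : opapp A (opapp B v) = opapp (opmul A B) v.
Proof.
apply/funext => s; rewrite /opapp /opmul.
under eq_bigr do rewrite mulr_sumr.
rewrite exchange_big; apply: eq_bigr => t _; rewrite mulr_suml.
by apply: eq_bigr => u _; rewrite mulrA.
Qed.

Lemma psd_diag_ge0 A s : psd A -> 0 <= A s s.
Proof.
move=> /(_ (fun u => (u == s)%:R)); rewrite /opapp.
under eq_bigr do rewrite sum_mul_delta.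
rewrite (bigD1 s) //= eqxx conjc1 mul1r big1 ?addr0 // => t /negbTE ->.
by rewrite conjc0 mul0r.
Qed.

(* [<v, A v> >= 0] at [v = a e_s + b e_t]. *)
Lemma psd_form2 A s t (a b : C) : psd A -> s != t ->
  0 <= a^*%C * (A s s * a + A s t * b) + b^*%C * (A t s * a + A t t * b).
Proof.
move=> psdA neq_st; move: (psdA (fun u => (u == s)%:R * a + (u == t)%:R * b)).
rewrite /opapp.
have appE u : \sum_w A u w * ((w == s)%:R * a + (w == t)%:R * b)
              = A u s * a + A u t * b.
  rewrite -(sum_mul_delta (fun w => A u w * a) s).
  rewrite -(sum_mul_delta (fun w => A u w * b) t) -big_split /=.
  by apply: eq_bigr => w _; ring.
under eq_bigr do rewrite appE.
rewrite (bigD1 s) //= (bigD1 t) 1?eq_sym //= big1 ?addr0; last first.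
  by move=> u /andP[/negbTE -> /negbTE ->]; rewrite mul0r add0r mul0r conjc0 mul0r.
rewrite eqxx eq_sym (negbTE neq_st) eqxx !rmorphD !rmorphM !rmorph_nat.
by rewrite !mul1r !mul0r !addr0 !add0r.
Qed.

Lemma psd_hermitian A s t : psd A -> A s t = (A t s)^*%C.
Proof.
move=> psdA; have [<-|neq_st] := eqVneq s t.
  move: (psd_diag_ge0 s psdA); case: (A s s) => a b.
  by rewrite lecE /= => /andP[/eqP -> _]; rewrite oppr0.
(* The forms at [(1, 1)] and [(1, 'i)] are real. *)
move: (psd_form2 1 1 psdA neq_st) (psd_form2 1 'i psdA neq_st).
move: (psd_diag_ge0 s psdA) (psd_diag_ge0 t psdA).
case: (A s s) => [p1 p2]; case: (A s t) => [x1 x2]; case: (A t s) => [y1 y2].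
case: (A t t) => [q1 q2]; rewrite !lecE /=; simpc; rewrite /=.
move=> /andP[/eqP e1 _] /andP[/eqP e2 _] /andP[/eqP e3 _] /andP[/eqP e4 _].
congr Complex; lra.
Qed.

Lemma psd_offdiag_le A s t : psd A -> s != t ->
  (complex.Re (A s t))^+2 + (complex.Im (A s t))^+2
  <= complex.Re (A s s) * complex.Re (A t t).
Proof.
move=> psdA neq_st.
(* With [m = |A s t|^2], the form at [(a, -b A t s)] is [p a^2 - 2 a b m + q b^2 m];
   at [(q + 1, 1)] it is [-(q + 2) m] when [p = 0], and at [(m, p)] it is
   [p m (p q - m)]. *)
have form (a b : R) : 0 <= a%:C^*%C * (A s s * a%:C + A s t * (- b%:C * A t s))
    + (- b%:C * A t s)^*%C * (A t s * a%:C + A t t * (- b%:C * A t s)).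
  exact: psd_form2.
move: form (psd_diag_ge0 s psdA) (psd_diag_ge0 t psdA); rewrite (psd_hermitian t s psdA).
case: (A s s) => [p p']; case: (A s t) => [x1 x2]; case: (A t t) => [q q'] /=.
rewrite !lecE /= => form /andP[/eqP p'0 p_ge0] /andP[/eqP q'0 q_ge0].
move: (form (q + 1) 1) (form (x1^+2 + x2^+2) p).
rewrite /= !lecE /=; simpc; rewrite /= p'0 q'0 => /andP[_ h1] /andP[_ h2].
set m := x1^+2 + x2^+2.
have m_ge0 : 0 <= m by rewrite /m; nra.
have [p0|p_neq0] := eqVneq p 0.
  subst p; have : m * (q + 2) <= 0 by rewrite /m; nra.
  by nra.
have p_gt0 : 0 < p by rewrite lt_def p_neq0 p_ge0.
have [->|m_neq0] := eqVneq m 0; first by nra.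
have m_gt0 : 0 < m by rewrite lt_def m_neq0 m_ge0.
have : 0 <= p * (m * (p * q - m)) by rewrite /m; nra.
by rewrite !pmulr_rge0 // subr_ge0.
Qed.

Lemma psd_diag_eq0 A s t : psd A -> A s s = 0 -> A s t = 0.
Proof.
move=> psdA Ass0; have [<-//|neq_st] := eqVneq s t.
move: (psd_offdiag_le psdA neq_st); rewrite Ass0 mul0r.
case: (A s t) => a b /= sq_le0; apply/eqP; rewrite eq_complex /=.
by apply/andP; split; apply/eqP; nra.
Qed.

Lemma optr_ge0 A : psd A -> 0 <= optr A.
Proof. by move=> psdA; apply: sumr_ge0 => s _; apply: psd_diag_ge0. Qed.

Lemma optrC A B : optr (opmul A B) = optr (opmul B A).
Proof.
rewrite /optr /opmul exchange_big; apply: eq_bigr => s _.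
by apply: eq_bigr => t _; rewrite mulrC.
Qed.

Lemma optr_sumr (I : Type) (r : seq I) (F : I -> op R S) :
  optr (fun s t => \sum_(i <- r) F i s t) = \sum_(i <- r) optr (F i).
Proof. by rewrite /optr exchange_big. Qed.

Lemma optr_mul_sumr (I : Type) (r : seq I) (F : I -> op R S) A :
  optr (opmul A (fun s t => \sum_(i <- r) F i s t)) = \sum_(i <- r) optr (opmul A (F i)).
Proof.
rewrite /optr /opmul.
under eq_bigr do under eq_bigr do rewrite big_distrr.
by under eq_bigr do rewrite exchange_big; rewrite exchange_big.
Qed.

Lemma opsubr0 A : opsub A (@op0 R S) = A.
Proof. by apply/funext => s; apply/funext => t; rewrite /opsub subr0. Qed.

Lemma projection_psd A : projection A -> psd A.
Proof.
case=> hermA idemA v; rewrite -idemA /opapp /opmul.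
have -> : \sum_s (v s)^*%C * \sum_t (\sum_u A s u * A u t) * v t
          = \sum_u (\sum_s A u s * v s)^*%C * (\sum_t A u t * v t).
  under eq_bigr do under eq_bigr do rewrite mulr_suml.
  under eq_bigr do rewrite exchange_big mulr_sumr.
  rewrite exchange_big; apply: eq_bigr => u _.
  rewrite conjc_sum mulr_suml; apply: eq_bigr => s _.
  rewrite mulr_sumr mulr_sumr; apply: eq_bigr => t _.
  by rewrite conjcM -hermA; ring.
by apply: sumr_ge0 => u _; rewrite mulrC mulcJ_ge0.
Qed.

Lemma projection_opsub A : projection A -> projection (opsub (@opid R S) A).
Proof.
case=> hermA idemA; split=> [s t|].
  by rewrite /opsub /opid conjcB conjc_nat eq_sym -hermA.
apply/funext => s; apply/funext => t; rewrite /opmul /opsub /opid.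
under eq_bigr do rewrite mulrBl !mulrBr.
have idemE : \sum_u A s u * A u t = A s t := congr1 (fun M => M s t) idemA.
by rewrite !sumrB !sum_delta_mul sum_mul_delta idemE; ring.
Qed.

Lemma projection_qpredicate A : projection A -> qpredicate A.
Proof.
move=> projA; split; first by case: projA.
split; last exact/projection_psd/projection_opsub.
by rewrite /lowner opsubr0; apply: projection_psd.
Qed.

Definition diagop (f : S -> C) : op R S := fun s t => (s == t)%:R * f s.

Lemma psd_diagop (f : S -> C) : (forall s, 0 <= f s) -> psd (diagop f).
Proof.
move=> f_ge0 v; rewrite /opapp /diagop.
have appE s : \sum_t (s == t)%:R * f s * v t = f s * v s.
  by rewrite -(sum_delta_mul (fun t => f s * v t)); apply: eq_bigr => t _; rewrite mulrA.
under eq_bigr do rewrite appE.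
apply: sumr_ge0 => s _; rewrite mulrCA mulr_ge0 //.
by rewrite mulrC mulcJ_ge0.
Qed.

Lemma projection_diagop (P : pred S) : projection (diagop (fun s => (P s)%:R)).
Proof.
split=> [s t|].
  by rewrite /diagop conjcM !conjc_nat eq_sym; have [->|] := eqVneq t s; rewrite ?mul0r.
apply/funext => s; apply/funext => t; rewrite /opmul /diagop.
rewrite -(sum_delta_mul (fun u => (u == t)%:R * (P u)%:R)).
apply: eq_bigr => u _; have [<-|_] := eqVneq s u; last by rewrite !mul0r.
by case: (P s); rewrite !mul1r ?mulr0.
Qed.

Lemma optr_diagop f : optr (diagop f) = \sum_s f s.
Proof. by apply: eq_bigr => s _; rewrite /diagop eqxx mul1r. Qed.

Lemma optr_mul_diagop f A : optr (opmul (diagop f) A) = \sum_s f s * A s s.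
Proof.
apply: eq_bigr => s _; rewrite -(sum_delta_mul (fun u => f s * A u s)).
by apply: eq_bigr => u _; rewrite /diagop mulrA.
Qed.

End Operators.

Section Bipartite.
Variables (R : realType) (S1 S2 : finType).
Local Notation S := (S1 * S2)%type.
Implicit Types (rho sigma : op R S).

Lemma sum_pair (V : nmodType) (F : S -> V) :
  \sum_p F p = \sum_a \sum_b F (a, b).
Proof. by rewrite pair_bigA; apply: eq_bigr => -[a b]. Qed.

Lemma optr_ptr2 rho : optr (ptr2 rho) = optr rho.
Proof. by rewrite /optr /ptr2 sum_pair. Qed.

Lemma optr_ptr1 rho : optr (ptr1 rho) = optr rho.
Proof. by rewrite /optr /ptr1 sum_pair exchange_big. Qed.

Lemma optr_optensor (X : op R S1) (Y : op R S2) :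
  optr (optensor X Y) = optr X * optr Y.
Proof. by rewrite /optr sum_pair big_distrl; apply: eq_bigr => a _; rewrite big_distrr. Qed.

Lemma optr_coupling sigma (rho1 : op R S1) (rho2 : op R S2) :
  coupling sigma rho1 rho2 -> optr sigma = optr rho1.
Proof. by case=> _ [<- _]; rewrite optr_ptr2. Qed.

Lemma supp_in_col sigma (A : op R S) p q : supp_in sigma A ->
  sigma p q = opapp A (fun r => sigma r q) p.
Proof.
move=> supp; rewrite -[LHS](opapp_delta sigma) -supp.
by congr (opapp _ _ _); apply/funext => r; rewrite opapp_delta.
Qed.

Lemma projection_supp_in (A : op R S) : projection A -> supp_in A A.
Proof. by case=> _ idemA v; rewrite opapp_mul idemA. Qed.

Lemma supp_in_diagop (f : S -> R[i]) (P : pred S) :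
  (forall p, ~~ P p -> f p = 0) ->
  supp_in (diagop f) (diagop (fun p => (P p)%:R)).
Proof.
move=> f0 v; rewrite opapp_mul; congr (opapp _ v).
apply/funext => p; apply/funext => q; rewrite /opmul /diagop.
rewrite -(sum_delta_mul (fun u => (u == q)%:R * f u)).
apply: eq_bigr => u _; have [<-|_] := eqVneq p u; last by rewrite !mul0r.
by case: (boolP (P p)) => [_|/f0 ->]; rewrite ?mulr0 ?mul1r.
Qed.

Lemma ptr2_diagop (f : S -> R[i]) : ptr2 (diagop f) = diagop (fun a => \sum_b f (a, b)).
Proof.
apply/funext => a; apply/funext => c; rewrite /ptr2 /diagop mulr_sumr.
by apply: eq_bigr => b _; rewrite xpair_eqE eqxx andbT.
Qed.

Lemma ptr1_diagop (f : S -> R[i]) : ptr1 (diagop f) = diagop (fun b => \sum_a f (a, b)).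
Proof.
apply/funext => b; apply/funext => d; rewrite /ptr1 /diagop mulr_sumr.
by apply: eq_bigr => a _; rewrite xpair_eqE eqxx.
Qed.

End Bipartite.

(* One variable whose state space has dimension [(qubit_dim 0).+1 = 2]. *)
Definition qubit_dim : 'I_1 -> nat := fun _ => 1%N.
Definition qubit := st qubit_dim.

(* Locked, so that simplification does not expand basis states into finfuns. *)
HB.lock Definition qbit (k : 'I_2) : qubit :=
  @finfun 'I_1 (fun i => 'I_(qubit_dim i).+1) (fun _ => k).

Notation q0 := (qbit ord0).
Notation q1 := (qbit ord_max).

Lemma qbit_eqE (s : qubit) k : (s == qbit k) = (s ord0 == k).
Proof.
rewrite qbit.unlock; apply/eqP/eqP => [->|<-]; first by rewrite ffunE.
by apply/ffunP => i; rewrite ffunE (ord1 i).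
Qed.

Lemma eq_q0q1 : (q0 == q1) = false. Proof. by rewrite qbit_eqE qbit.unlock ffunE. Qed.
Lemma eq_q1q0 : (q1 == q0) = false. Proof. by rewrite eq_sym eq_q0q1. Qed.

Definition qubitE := (xpair_eqE, eqxx, eq_q0q1, eq_q1q0).

Lemma qubitP (s : qubit) : s = q0 \/ s = q1.
Proof.
suff : (s == q0) || (s == q1) by case/orP => /eqP; [left | right].
by rewrite !qbit_eqE; case: (s ord0) => -[|[|//]].
Qed.

Lemma sum_qbit (V : nmodType) (F : qubit -> V) : \sum_s F s = \sum_(i < 2) F (qbit i).
Proof.
rewrite (reindex qbit) //; exists (fun s : qubit => s ord0) => [k _|s _].
  by apply/eqP; rewrite -qbit_eqE.
by apply/eqP; rewrite eq_sym qbit_eqE.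
Qed.

Lemma sum_qubit (V : nmodType) (F : qubit -> V) : \sum_s F s = F q0 + F q1.
Proof.
rewrite sum_qbit big_ord_recl big_ord1.
by congr (F (qbit _) + F (qbit _)); apply: val_inj.
Qed.

Lemma sum_qubit2 (V : nmodType) (F : (qubit * qubit)%type -> V) :
  \sum_p F p = F (q0, q0) + F (q0, q1) + F (q1, q0) + F (q1, q1).
Proof. by rewrite sum_pair !sum_qubit addrA. Qed.

Section QubitOperators.
Variable R : realType.
Local Notation C := R[i].
Local Notation op2 := (op R (qubit * qubit)%type).

(* With [Φ = (|00> + |11>)/√2] and [|+> = (|0> + |1>)/√2]: [bellop c = 2c |Φ><Φ|],
   [bell = |Φ><Φ|], [zero_plus = |0><0| ⊗ |+><+|], [differ] projects onto
   [span {|01>, |10>}], [state0 c = c |0><0|] and [state00 c = c |00><00|]. *)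
Definition bellop (c : C) : op2 := fun p q => ((p.1 == p.2) && (q.1 == q.2))%:R * c.
Definition bell : op2 := bellop 2^-1.
Definition zero_plus : op2 := fun p q => ((p.1 == q0) && (q.1 == q0))%:R / 2.
Definition differ : op2 := diagop (fun p => (p.1 != p.2)%:R).
Definition half_id (S : finType) : op R S := diagop (fun _ => 2^-1).
Definition state0 (c : C) : op R qubit := diagop (fun s => (s == q0)%:R * c).
Definition state00 (c : C) : op2 := diagop (fun p => (p == (q0, q0))%:R * c).

Lemma bell_projection : projection bell.
Proof.
split=> [p q|]; first by rewrite /bell /bellop conjc_half andbC.
apply/funext => p; apply/funext => q; rewrite /opmul sum_qubit2 /bell /bellop /= !qubitE /=.
by case: (p.1 == p.2); case: (q.1 == q.2); rewrite /=; field.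
Qed.

Lemma zero_plus_projection : projection zero_plus.
Proof.
split=> [p q|]; first by rewrite /zero_plus conjc_half andbC.
apply/funext => p; apply/funext => q; rewrite /opmul sum_qubit2 /zero_plus /= !qubitE /=.
by case: (p.1 == q0); case: (q.1 == q0); rewrite /=; field.
Qed.

Lemma optr_bell : optr bell = 1.
Proof. by rewrite /optr sum_qubit2 /bell /bellop /= !qubitE /=; field. Qed.

Lemma optr_mul_half_id (S : finType) (A : op R S) :
  optr (opmul (half_id (S := S)) A) = optr A / 2.
Proof. by rewrite optr_mul_diagop mulr_suml; apply: eq_bigr => s _; rewrite mulrC. Qed.

Lemma half_id_qpredicate (S : finType) : qpredicate (half_id (S := S)).
Proof.
have psd_half : psd (half_id (S := S)) by apply: psd_diagop => _; exact: ltW inv2_gt0.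
split=> [s t|]; first by rewrite /half_id /diagop conjcM conjc_inv !conjc_nat eq_sym.
split; rewrite /lowner ?opsubr0 //.
have -> : opsub (@opid R S) (half_id (S := S)) = half_id (S := S) => //.
by apply/funext => s; apply/funext => t; rewrite /opsub /opid /half_id /diagop; field.
Qed.

Lemma ptr2_bellop c : ptr2 (bellop c) = diagop (fun _ => c).
Proof.
apply/funext => s; apply/funext => t; rewrite /ptr2 /bellop /diagop /= [s == t]eq_sym.
rewrite -(sum_delta_mul (fun u => (t == u)%:R * c)).
by apply: eq_bigr => u _; rewrite -mulnb natrM mulrA.
Qed.

Lemma ptr1_bellop c : ptr1 (bellop c) = diagop (fun _ => c).
Proof.
apply/funext => s; apply/funext => t; rewrite /ptr1 /bellop /diagop /= [s == t]eq_sym.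
rewrite -(sum_delta_mul (fun u => (t == u)%:R * c)).
by apply: eq_bigr => u _; rewrite -mulnb natrM mulrA (eq_sym u s) (eq_sym u t).
Qed.

Lemma bell_row p r : bell p r = (p.1 == p.2)%:R * bell (q0, q0) r.
Proof. by rewrite /bell /bellop /= eqxx; case: (p.1 == p.2); rewrite /= ?mul1r ?mul0r. Qed.

Lemma supp_in_bell sigma : psd sigma -> supp_in sigma bell ->
  sigma = bellop (sigma (q0, q0) (q0, q0)).
Proof.
move=> psd_s supp.
have row p q : sigma p q = (p.1 == p.2)%:R * sigma (q0, q0) q.
  rewrite (supp_in_col p q supp) (supp_in_col (q0, q0) q supp) /opapp mulr_sumr.
  by apply: eq_bigr => r _; rewrite bell_row mulrA.
apply/funext => p; apply/funext => q; rewrite /bellop -mulnb natrM.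
rewrite row (psd_hermitian (q0, q0) q psd_s) row conjcM conjc_nat.
by rewrite -(psd_hermitian (q0, q0) (q0, q0) psd_s); ring.
Qed.

Lemma psd_qubit_entrywise_le (X Y : op R qubit) : psd X -> psd Y ->
  \sum_s \sum_t X s t * Y s t <= optr X * optr Y.
Proof.
move=> psdX psdY; have neq01 : q0 != q1 by rewrite eq_q0q1.
rewrite /optr !sum_qubit (psd_hermitian q1 q0 psdX) (psd_hermitian q1 q0 psdY).
move: (psd_offdiag_le psdX neq01) (psd_offdiag_le psdY neq01).
move: (psd_diag_ge0 q0 psdX) (psd_diag_ge0 q1 psdX) (psd_diag_ge0 q0 psdY) (psd_diag_ge0 q1 psdY).
case: (X q0 q0) => [x0 x0']; case: (X q1 q1) => [x1 x1']; case: (X q0 q1) => [a b].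
case: (Y q0 q0) => [y0 y0']; case: (Y q1 q1) => [y1 y1']; case: (Y q0 q1) => [c d] /=.
rewrite !lecE /= => /andP[/eqP-> hx0] /andP[/eqP-> hx1] /andP[/eqP-> hy0] /andP[/eqP-> hy1].
move=> hX hY.
simpc; rewrite /=; apply/andP; split; first by apply/eqP; ring.
by have := re_mul_le hx0 hx1 hy0 hy1 hX hY; lra.
Qed.

Lemma optr_mul_bell rho :
  optr (opmul bell rho) = (\sum_s \sum_t rho (s, s) (t, t)) / 2.
Proof. by rewrite /optr /opmul !sum_qubit2 !sum_qubit /bell /bellop /= !qubitE /=; ring. Qed.

Lemma bell_separable_le rho : separable rho -> optr (opmul bell rho) <= optr rho / 2.
Proof.
case=> l [psd_l ->]; rewrite optr_mul_sumr optr_sumr mulr_suml.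
rewrite big_seq [leRHS]big_seq; apply: ler_sum => x /psd_l [psdX psdY].
rewrite optr_mul_bell optr_optensor ler_wpM2r ?(ltW inv2_gt0) //.
exact: psd_qubit_entrywise_le.
Qed.

Lemma ptr2_state00 c : ptr2 (state00 c) = state0 c.
Proof.
rewrite ptr2_diagop; congr diagop; apply/funext => a.
by rewrite sum_qubit !qubitE andbT andbF mul0r addr0.
Qed.

Lemma ptr1_state00 c : ptr1 (state00 c) = state0 c.
Proof.
rewrite ptr1_diagop; congr diagop; apply/funext => b.
by rewrite sum_qubit !qubitE /= mul0r addr0.
Qed.

Lemma optr_state00 c : optr (state00 c) = c.
Proof. by rewrite optr_diagop sum_qubit2 !qubitE /= !mul0r !addr0 mul1r. Qed.

Lemma optr_mul_state00 (A : op2) c :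
  optr (opmul A (state00 c)) = c * A (q0, q0) (q0, q0).
Proof. by rewrite optrC optr_mul_diagop sum_qubit2 !qubitE /= !mul0r !addr0 mul1r. Qed.

Lemma psd_state00 c : 0 <= c -> psd (state00 c).
Proof. by move=> c_ge0; apply: psd_diagop => p; rewrite mulr_ge0 ?ler0n. Qed.

Lemma coupling_state0 sigma : coupling sigma (state0 1) (state0 1) -> sigma = state00 1.
Proof.
case=> psd_s [marg2 marg1].
have diag_ge0 p : 0 <= sigma p p := psd_diag_ge0 p psd_s.
have diag0 p : p != (q0, q0) -> sigma p p = 0.
  case: p => a b; rewrite xpair_eqE negb_and => /orP[a_neq|b_neq].
  - have : ptr2 sigma a a = 0 by rewrite marg2 /state0 /diagop (negbTE a_neq) mul0r mulr0.
    by move/(psumr_eq0P (fun u _ => diag_ge0 (a, u))); apply.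
  - have : ptr1 sigma b b = 0 by rewrite marg1 /state0 /diagop (negbTE b_neq) mul0r mulr0.
    by move/(psumr_eq0P (fun u _ => diag_ge0 (u, b))); apply.
have diag00 : sigma (q0, q0) (q0, q0) = 1.
  have := congr1 (fun M => M q0 q0) marg2.
  by rewrite /ptr2 /state0 /diagop sum_qubit (diag0 (q0, q1)) ?qubitE // addr0 !mul1r.
apply/funext => p; apply/funext => q; rewrite /state00 /diagop /=.
have [->|p_neq] := eqVneq p (q0, q0); last first.
  by rewrite (psd_diag_eq0 q psd_s (diag0 p p_neq)) mul0r mulr0.
have [->|q_neq] := eqVneq q (q0, q0); first by rewrite diag00 !mul1r.
by rewrite (psd_hermitian _ _ psd_s) (psd_diag_eq0 _ psd_s (diag0 q q_neq)) conjc0 mul0r.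
Qed.

End QubitOperators.

Arguments bell {R}.
Arguments zero_plus {R}.
Arguments differ {R}.
Arguments half_id {R S}.

Section Examples.
Variable R : realType.
Local Notation C := R[i].
Local Notation bell := (@bell R).
Local Notation zero_plus := (@zero_plus R).
Local Notation differ := (@differ R).
Local Notation half_id S := (@half_id R S).

Definition skip_prog : qprog R := @QProg R 1 qubit_dim (PSkip R qubit_dim) I.
Definition reset_prog : qprog R := @QProg R 1 qubit_dim (PInit R qubit_dim ord0) I.

Lemma resetKE (i : 'I_2) (s t : qubit) :
  @resetK R 1 qubit_dim ord0 i s t = ((s == q0) && (t == qbit i))%:R.
Proof.
rewrite /resetK; have -> : [forall j, (j != ord0) ==> (s j == t j)].
  by apply/forallP => j; rewrite (ord1 j).
by rewrite !qbit_eqE.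
Qed.

Lemma reset_sem (rho : op R qubit) :
  @qsem R reset_prog rho = state0 (optr rho).
Proof.
apply/funext => s; apply/funext => t.
rewrite /state0 /diagop /= /optr sum_qbit !mulr_sumr; apply: eq_bigr => i _.
rewrite /sandwich /opmul /opadj.
have resetK_mul u :
    \sum_w @resetK R 1 qubit_dim ord0 i s w * rho w u = (s == q0)%:R * rho (qbit i) u.
  under eq_bigr do rewrite resetKE -mulnb natrM -mulrA.
  by rewrite -mulr_sumr; under eq_bigr do rewrite mulrC; rewrite sum_mul_delta.
under eq_bigr do rewrite resetK_mul resetKE -mulnb natrM conjcM !conjc_nat mulrA.
rewrite sum_mul_delta; have [->|_] := eqVneq s q0; last by rewrite mul0r !mulr0 mul0r.
by rewrite eq_sym mul1r mulrC.
Qed.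

Lemma state00_pdensity : pdensity (state00 (1 : C)).
Proof. by split; [apply: psd_state00; exact: ler01 | rewrite optr_state00]. Qed.

Lemma state00_separable : separable (state00 (1 : C)).
Proof.
exists [:: (state0 (1 : C), state0 (1 : C))]; split.
  by move=> x; rewrite inE => /eqP -> /=; split; apply: psd_diagop => s; rewrite mulr1 ler0n.
apply/funext => -[a b]; apply/funext => -[c d].
rewrite big_seq1 /optensor /state00 /state0 /diagop /=.
by rewrite !xpair_eqE -!mulnb !natrM; ring.
Qed.

Lemma bell_pdensity : pdensity bell.
Proof. by split; [exact/projection_psd/bell_projection | rewrite optr_bell]. Qed.

Lemma optr_half_id_qubit : optr (half_id qubit) = 1.
Proof. by rewrite optr_diagop sum_qubit; field. Qed.

Lemma half_id_pdensity : pdensity (half_id qubit).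
Proof.
split; last by rewrite optr_half_id_qubit.
by case: (half_id_qpredicate R qubit) => _ [+ _]; rewrite /lowner opsubr0.
Qed.

Lemma skip_pvalid_bell_differ :
  pvalid (P1 := skip_prog) (P2 := skip_prog) bell differ.
Proof.
move=> rho1 rho2 _ _ [sigma [[psd_s [<- <-]] supp]].
set c := sigma (q0, q0) (q0, q0); have c_ge0 : 0 <= c := psd_diag_ge0 _ psd_s.
have sigmaE := supp_in_bell psd_s supp; rewrite -/c in sigmaE.
exists (diagop (fun p => (p.1 != p.2)%:R * c)); split; [split; [|split] |].
- by apply: psd_diagop => p; rewrite mulr_ge0 ?ler0n.
- rewrite ptr2_diagop sigmaE ptr2_bellop; congr diagop; apply/funext => a.
  by rewrite sum_qubit; case: (qubitP a) => ->; rewrite !qubitE /=; ring.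
- rewrite ptr1_diagop sigmaE ptr1_bellop; congr diagop; apply/funext => b.
  by rewrite sum_qubit; case: (qubitP b) => ->; rewrite !qubitE /=; ring.
- by apply: supp_in_diagop => p /negbTE ->; rewrite mul0r.
Qed.

Lemma skip_not_svalid_bell_differ :
  ~ svalid (P1 := skip_prog) (P2 := skip_prog) bell differ.
Proof.
move=> /(_ _ state00_pdensity state00_separable) [sigma []].
rewrite /qsem /= ptr2_state00 ptr1_state00 => /coupling_state0 ->.
rewrite !optr_mul_state00 optr_state00 /bell /bellop /differ /diagop /= !eqxx /=.
by rewrite !mul1r add0r subrr => /(lt_le_trans inv2_gt0); rewrite ltxx.
Qed.

Lemma reset_svalid_bell_zero_plus :
  svalid (P1 := reset_prog) (P2 := reset_prog) bell zero_plus.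
Proof.
move=> rho [psd_rho _] sep_rho; exists (state00 (optr rho)); split.
  split; first exact/psd_state00/optr_ge0.
  by rewrite !reset_sem optr_ptr2 optr_ptr1 ptr2_state00 ptr1_state00.
rewrite optr_mul_state00 optr_state00 addrK /zero_plus /= !eqxx /= mul1r.
exact: bell_separable_le.
Qed.

Lemma reset_not_pvalid_bell_zero_plus :
  ~ pvalid (P1 := reset_prog) (P2 := reset_prog) bell zero_plus.
Proof.
have lift : lifting (half_id qubit) bell (half_id qubit).
  exists bell; split; last exact/projection_supp_in/bell_projection.
  split; first exact/projection_psd/bell_projection.
  by split; [exact: ptr2_bellop | exact: ptr1_bellop].
move=> /(_ _ _ half_id_pdensity half_id_pdensity lift) [sigma []].
rewrite !reset_sem optr_half_id_qubit => /coupling_state0 ->.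
move=> /(supp_in_col (q0, q1) (q0, q0)).
rewrite /opapp sum_qubit2 /state00 /diagop /zero_plus /= !qubitE /=.
rewrite !mul0r !mulr1 !mul1r mulr0 !addr0 => /eqP.
by rewrite lt_eqF ?inv2_gt0.
Qed.

Lemma skip_svalid_bell_half_id :
  svalid (P1 := skip_prog) (P2 := skip_prog) bell (half_id _).
Proof.
move=> rho [psd_rho _] sep_rho; exists rho; split; first by [].
by rewrite optr_mul_half_id addrK; apply: bell_separable_le.
Qed.

Lemma skip_not_valid_bell_half_id :
  ~ valid (P1 := skip_prog) (P2 := skip_prog) bell (half_id _).
Proof.
move=> /(_ _ bell_pdensity) [sigma [/optr_coupling tr_sigma]].
rewrite optr_mul_half_id tr_sigma /qsem /= optr_ptr2 (proj2 (bell_projection R)) optr_bell.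
by rewrite addrK mul1r => /le_lt_trans/(_ inv2_lt1); rewrite ltxx.
Qed.

End Examples.

Theorem propositionA15p2 (R : realType) :
  (exists (P1 P2 : qprog R) (A B : op R (prod (qstate P1) (qstate P2))),
      projection A /\ projection B /\ pvalid A B /\ ~ svalid A B) /\
  (exists (P1 P2 : qprog R) (A B : op R (prod (qstate P1) (qstate P2))),
      projection A /\ projection B /\ svalid A B /\ ~ pvalid A B) /\
  (forall (P1 P2 : qprog R) (A B : op R (prod (qstate P1) (qstate P2))),
      qpredicate A -> qpredicate B -> valid A B -> svalid A B) /\
  (exists (P1 P2 : qprog R) (A B : op R (prod (qstate P1) (qstate P2))),
      qpredicate A /\ qpredicate B /\ svalid A B /\ ~ valid A B).
Proof.
have bell_proj := bell_projection R.
split.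
  exists (skip_prog R), (skip_prog R), bell, differ.
  split; first exact: bell_proj.
  split; first exact: projection_diagop.
  by split; [exact: skip_pvalid_bell_differ | exact: skip_not_svalid_bell_differ].
split.
  exists (reset_prog R), (reset_prog R), bell, zero_plus.
  split; first exact: bell_proj.
  split; first exact: zero_plus_projection.
  by split; [exact: reset_svalid_bell_zero_plus | exact: reset_not_pvalid_bell_zero_plus].
split; first by move=> P1 P2 A B _ _ valid_AB rho pd_rho _; apply: valid_AB.
exists (skip_prog R), (skip_prog R), bell, half_id.
split; first exact: projection_qpredicate.
split; first exact: half_id_qpredicate.
by split; [exact: skip_svalid_bell_half_id | exact: skip_not_valid_bell_half_id].
Qed.
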